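(* Let $(A,+,\circ)$ be a $*$-nilpotent skew brace of nilpotent type and let $I$ be a nonzero ideal of $A$. Then $\zeta(A)\cap I\neq 0$. In particular, if $A\neq 0$ then $\zeta(A)\neq0$.
   Context: A skew brace is a triple $(A,+,\circ)$ where $(A,+)$ and $(A,\circ)$ are groups (not necessarily abelian; $+$ is written additively) such that $x\circ(y+z)=(x\circ y)-x+(x\circ z)$ for all $x,y,z\in A$; the common neutral element is $0$. It is of nilpotent type if $(A,+)$ is nilpotent. Let $\lambda_x(y)=-x+(x\circ y)$ and $x*y=\lambda_x(y)-y$; $[x,y]_+=x+y-x-y$. For subsets $X,Y$, $X*Y$ is the subgroup of $(A,+)$ generated by $\{x*y\}$. Left and right series: $A^1=A$, $A^{n+1}=A*A^n$; $A^{(1)}=A$, $A^{(n+1)}=A^{(n)}*A$; $A$ is $*$-nilpotent if $A^n=0$ and $A^{(m)}=0$ for some $n,m$. An ideal is a subgroup $I$ of $(A,+)$ with $\lambda_a(I)\subseteq I$ for all $a\in A$ that is normal in both $(A,+)$ and $(A,\circ)$. The center is $\zeta(A)=\{x\in A: x*y=y*x=[x,y]_+=0\ \forall y\in A\}$. *)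

From Stdlib Require Import Arith.

Set Implicit Arguments.

Record skew_brace := SkewBrace {
  car :> Type;
  add : car -> car -> car;
  zero : car;
  opp : car -> car;
  circ : car -> car -> car;
  cinv : car -> car;
  addA : forall x y z, add x (add y z) = add (add x y) z;
  add0r : forall x, add zero x = x;
  addr0 : forall x, add x zero = x;
  addNr : forall x, add (opp x) x = zero;
  addrN : forall x, add x (opp x) = zero;
  circA : forall x y z, circ x (circ y z) = circ (circ x y) z;
  circ0r : forall x, circ zero x = x;
  circr0 : forall x, circ x zero = x;
  circVr : forall x, circ (cinv x) x = zero;
  circrV : forall x, circ x (cinv x) = zero;
  brace_compat : forall x y z,
    circ x (add y z) = add (add (circ x y) (opp x)) (circ x z)
}.

Section Defs.
Variable A : skew_brace.

Local Notation "x + y" := (@add A x y).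
Local Notation "- x" := (@opp A x).
Local Notation "x - y" := (@add A x (@opp A y)).
Local Notation "0" := (zero A).

Definition lam (x y : A) : A := - x + @circ A x y.
Definition star (x y : A) : A := lam x y - y.
Definition comm_add (x y : A) : A := x + y - x - y.

Definition is_add_subgroup (S : A -> Prop) : Prop :=
  S 0 /\ (forall x y, S x -> S y -> S (x + y)) /\ (forall x, S x -> S (- x)).

Definition gen_add (X : A -> Prop) : A -> Prop :=
  fun z => forall S, is_add_subgroup S -> (forall x, X x -> S x) -> S z.

Definition star_set (X Y : A -> Prop) : A -> Prop :=
  gen_add (fun z => exists x y, X x /\ Y y /\ z = star x y).

Definition comm_set (X Y : A -> Prop) : A -> Prop :=
  gen_add (fun z => exists x y, X x /\ Y y /\ z = comm_add x y).

Definition full_set : A -> Prop := fun _ => True.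
Definition is_trivial (S : A -> Prop) : Prop := forall x, S x -> x = 0.

Fixpoint lcs (n : nat) : A -> Prop :=
  match n with
  | O => full_set
  | S m => match m with O => full_set | _ => comm_set full_set (lcs m) end
  end.

Definition nilpotent_type : Prop := exists n, is_trivial (lcs n).

(** left series A^1 = A, A^{n+1} = A * A^n   (index 0 also gives A) *)
Fixpoint left_series (n : nat) : A -> Prop :=
  match n with
  | O => full_set
  | S m => match m with O => full_set | _ => star_set full_set (left_series m) end
  end.

Fixpoint right_series (n : nat) : A -> Prop :=
  match n with
  | O => full_set
  | S m => match m with O => full_set | _ => star_set (right_series m) full_set end
  end.

Definition star_nilpotent : Prop :=
  (exists n, is_trivial (left_series n)) /\ (exists m, is_trivial (right_series m)).

Definition is_ideal (I : A -> Prop) : Prop :=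
  is_add_subgroup I /\
  (forall a x, I x -> I (lam a x)) /\
  (forall a x, I x -> I (a + x - a)) /\
  (forall a x, I x -> I (@circ A (@circ A a x) (@cinv A a))).

Definition center (x : A) : Prop :=
  forall y, star x y = 0 /\ star y x = 0 /\ comm_add x y = 0.

End Defs.

(** Let [Soc(A)] be the socle: the elements [z] with [z * y = 0] for all [y]
    (i.e. [lambda_z = id]) that are central in [(A,+)].  The proof has two
    descents, both inside a fixed nonzero ideal [I].

    - Into the socle.  If a nonzero [x] of [I] is not in the socle, then some
      [x * y] or some commutator [[y,x]_+] is nonzero; it lies again in [I] and
      one step deeper in the right series [A^(n)] or in the lower central
      series [gamma_j] of [(A,+)] respectively.  Both series end at [0], so a
      lexicographic descent reaches a nonzero element of [I] in the socle.
    - Into the center.  The socle is an additive subgroup stable under every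
      [lambda_a], hence under [z |-> a * z].  If a nonzero socle element [z]
      of [I] has some [a * z <> 0], replace it by [a * z], one step deeper in
      the left series [A^n]; that series ends at [0] as well.

    A socle element with [a * z = 0] for all [a] is central.  Both descents
    are instances of the trivial principle [down_to_zero] below. *)

From Stdlib Require Import Classical.

Arguments add {_}.
Arguments opp {_}.
Arguments circ {_}.
Arguments cinv {_}.
Arguments addA {_}.
Arguments add0r {_}.
Arguments addr0 {_}.
Arguments addNr {_}.
Arguments addrN {_}.
Arguments circA {_}.
Arguments circ0r {_}.
Arguments circr0 {_}.
Arguments circVr {_}.
Arguments circrV {_}.
Arguments brace_compat {_}.
Arguments lam {_}.
Arguments star {_}.
Arguments comm_add {_}.

Declare Scope brace_scope.
Local Notation "x + y" := (add x y) : brace_scope.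
Local Notation "- x" := (opp x) : brace_scope.
Local Notation "x ** y" := (circ x y) (at level 40) : brace_scope.
Local Open Scope brace_scope.

Section GroupCalculus.
Context {A : skew_brace}.
Implicit Types x y z : A.

Lemma addKl x y : x + (- x + y) = y.
Proof. rewrite addA, addrN, add0r. reflexivity. Qed.

Lemma addNKl x y : - x + (x + y) = y.
Proof. rewrite addA, addNr, add0r. reflexivity. Qed.

Lemma add_eq0 x y : x + y = zero A -> y = - x.
Proof. intro H. rewrite <- (addNKl x y), H, addr0. reflexivity. Qed.

Lemma sub_eq0 x y : x + - y = zero A -> x = y.
Proof. intro H. rewrite <- (addr0 x), <- (addNr y), addA, H, add0r. reflexivity. Qed.

Lemma opp0 : - zero A = zero A.
Proof. rewrite <- (add0r (- zero A)). apply addrN. Qed.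

Lemma oppK x : - - x = x.
Proof. symmetry. apply add_eq0. apply addNr. Qed.

Lemma oppD x y : - (x + y) = - y + - x.
Proof. symmetry. apply add_eq0. rewrite <- addA, addKl. apply addrN. Qed.

Lemma cinv_uniq x y : x ** y = zero A -> y = cinv x.
Proof.
  intro H. rewrite <- (circ0r y), <- (circVr x), <- circA, H, circr0. reflexivity.
Qed.

Lemma cinvK x : cinv (cinv x) = x.
Proof. symmetry. apply cinv_uniq. apply circVr. Qed.

End GroupCalculus.

Hint Rewrite <- @addA : brace.
Hint Rewrite @addKl @addNKl @oppD @oppK @opp0 @addrN @addNr @add0r @addr0 : brace.
Ltac group_simpl := autorewrite with brace; try reflexivity.

Lemma comm_add_eq0 {A : skew_brace} (x y : A) : comm_add x y = zero A <-> x + y = y + x.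
Proof.
  unfold comm_add. split; intro H.
  - apply sub_eq0 in H.
    transitivity ((x + y + - x) + x); [group_simpl | rewrite H; reflexivity].
  - rewrite H. group_simpl.
Qed.

Section Lambda.
Context {A : skew_brace}.
Implicit Types a b x y z : A.

Lemma circ_lam a b : a ** b = a + lam a b.
Proof. unfold lam. group_simpl. Qed.

Lemma lam_add a b c : lam a (b + c) = lam a b + lam a c.
Proof. unfold lam. rewrite brace_compat. group_simpl. Qed.

Lemma lam_circ a b c : lam (a ** b) c = lam a (lam b c).
Proof.
  assert (E : (a ** b) ** c = a ** b + - a + a ** (- b + b ** c)).
  { rewrite <- brace_compat, addKl, circA. reflexivity. }
  unfold lam. rewrite E. group_simpl.
Qed.

Lemma lam_inv a y : lam a (lam (cinv a) y) = y.
Proof. rewrite <- lam_circ, circrV. unfold lam. rewrite opp0, add0r, circ0r. reflexivity. Qed.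

Lemma star_add x y w : star x (y + w) = star x y + y + star x w + - y.
Proof. unfold star. rewrite lam_add. group_simpl. Qed.

End Lambda.

Section Series.
Context {A : skew_brace}.
Implicit Types x y z : A.

Lemma gen_add_subgroup (X : A -> Prop) : is_add_subgroup A (gen_add A X).
Proof.
  split; [|split].
  - intros S [S0 _] _. exact S0.
  - intros x y Hx Hy S HS HX. destruct HS as [S0 [SD SN]].
    apply SD; [apply Hx | apply Hy]; repeat split; auto.
  - intros x Hx S HS HX. destruct HS as [S0 [SD SN]].
    apply SN, Hx; repeat split; auto.
Qed.

Lemma gen_add_in (X : A -> Prop) x : X x -> gen_add A X x.
Proof. intros Hx S _ HX. auto. Qed.

Lemma gen_add_normal (X : A -> Prop) :
  (forall x y, X x -> gen_add A X (y + x + - y)) ->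
  forall x, gen_add A X x -> forall y, gen_add A X (y + x + - y).
Proof.
  intros HX x Hx.
  destruct (gen_add_subgroup X) as [G0 [GD GN]].
  apply Hx.
  - split; [|split].
    + intro y. group_simpl. exact G0.
    + intros x1 x2 H1 H2 y.
      replace (y + (x1 + x2) + - y) with ((y + x1 + - y) + (y + x2 + - y))
        by group_simpl.
      apply GD; auto.
    + intros x1 H1 y.
      replace (y + - x1 + - y) with (- (y + x1 + - y)) by group_simpl.
      apply GN; auto.
  - intros x1 Hx1 y. apply HX; auto.
Qed.

(** [X * A] is normal in [(A,+)], since [y + x * w - y = - x * y + x * (y + w)]. *)
Lemma star_set_full_normal (X : A -> Prop) x :
  star_set A X (full_set A) x -> forall y, star_set A X (full_set A) (y + x + - y).
Proof.
  apply gen_add_normal. intros g y [u [w [Hu [_ ->]]]].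
  destruct (gen_add_subgroup
              (fun z => exists x y, X x /\ full_set A y /\ z = star x y))
    as [_ [GD GN]].
  replace (y + star u w + - y) with (- star u y + star u (y + w))
    by (rewrite star_add; group_simpl).
  apply GD; [apply GN|]; apply gen_add_in; exists u; eexists; repeat split; eauto.
Qed.

Lemma right_series_subgroup n : is_add_subgroup A (right_series A n).
Proof.
  destruct n as [|[|n]]; try (repeat split); apply gen_add_subgroup.
Qed.

Lemma right_series_comm n a x :
  right_series A n x -> right_series A n (comm_add a x).
Proof.
  intro Hx. destruct (right_series_subgroup n) as [_ [RD RN]].
  unfold comm_add. apply RD; [|apply RN; exact Hx].
  destruct n as [|[|n]]; try exact I.
  apply star_set_full_normal. exact Hx.
Qed.

Lemma right_series_star n x y :
  right_series A n x -> right_series A (S n) (star x y).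
Proof.
  intro Hx. destruct n as [|n]; [exact I|].
  apply gen_add_in. exists x, y. repeat split; auto.
Qed.

Lemma left_series_star n x y :
  left_series A n y -> left_series A (S n) (star x y).
Proof.
  intro Hy. destruct n as [|n]; [exact I|].
  apply gen_add_in. exists x, y. repeat split; auto.
Qed.

Lemma lcs_comm n x y : lcs A n y -> lcs A (S n) (comm_add x y).
Proof.
  intro Hy. destruct n as [|n]; [exact I|].
  apply gen_add_in. exists x, y. repeat split; auto.
Qed.

End Series.

Section Ideals.
Context {A : skew_brace}.
Context {I : A -> Prop}.
Hypothesis HI : is_ideal A I.

(** [I * A] lies in [I]: write [x o y = y + lambda_y (y' o x o y)] with
    [y' = y^-1], and [y' o x o y] lies in [I] by normality in [(A,o)]. *)
Lemma ideal_star_l x y : I x -> I (star x y).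
Proof.
  intro Hx. destruct HI as [[_ [ID IN]] [IL [Iplus Icirc]]].
  set (x' := (cinv y ** x) ** cinv (cinv y)).
  assert (Hx' : I x') by (apply Icirc; exact Hx).
  assert (E : x ** y = y + lam y x').
  { rewrite <- circ_lam. unfold x'. rewrite cinvK, !circA, circrV, circ0r. reflexivity. }
  assert (E' : star x y = - x + (y + lam y x' + - y)).
  { unfold star, lam at 1. rewrite E. group_simpl. }
  rewrite E'. apply ID; auto.
Qed.

Lemma ideal_star_r x y : I y -> I (star x y).
Proof.
  intro Hy. destruct HI as [[_ [ID IN]] [IL _]]. unfold star. apply ID; auto.
Qed.

Lemma ideal_comm x y : I y -> I (comm_add x y).
Proof.
  intro Hy. destruct HI as [[_ [ID IN]] [_ [Iplus _]]]. unfold comm_add. apply ID; auto.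
Qed.

End Ideals.

Lemma full_set_ideal (A : skew_brace) : is_ideal A (full_set A).
Proof. repeat split. Qed.

Definition socle {A : skew_brace} (z : A) : Prop :=
  (forall y, star z y = zero A) /\ (forall y, comm_add y z = zero A).

Section Socle.
Context {A : skew_brace}.
Implicit Types a y z w : A.

Lemma socle_lam z y : socle z -> lam z y = y.
Proof. intros [Hz _]. apply sub_eq0, Hz. Qed.

Lemma socle_circ z y : socle z -> z ** y = z + y.
Proof. intro Hz. rewrite circ_lam, socle_lam; auto. Qed.

Lemma socle_add_comm z y : socle z -> y + z = z + y.
Proof. intros [_ Hz]. apply comm_add_eq0, Hz. Qed.

Lemma socle_add z w : socle z -> socle w -> socle (z + w).
Proof.
  intros Hz Hw. split; intro y.
  - unfold star. rewrite <- (socle_circ z w Hz), lam_circ, !socle_lam; auto. apply addrN.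
  - apply comm_add_eq0.
    rewrite addA, (socle_add_comm z y Hz), <- addA, (socle_add_comm w y Hw), addA.
    reflexivity.
Qed.

(** On the socle the two inverses agree, [-z = z^-1]. *)
Lemma socle_opp z : socle z -> socle (- z).
Proof.
  intro Hz.
  assert (E : - z = cinv z).
  { apply cinv_uniq. rewrite socle_circ; auto. apply addrN. }
  split; intro y.
  - unfold star. rewrite E.
    replace (lam (cinv z) y) with y; [apply addrN|].
    rewrite <- (lam_inv z y) at 1. apply socle_lam; exact Hz.
  - apply comm_add_eq0.
    transitivity (- z + ((z + y) + - z)); [group_simpl|].
    rewrite <- (socle_add_comm z y Hz). group_simpl.
Qed.

(** [lambda_a z] is central in [(A,+)] because [lambda_a] is an automorphism,
    and [lambda_(lambda_a z) = id] because [lambda_a z = a o z o a^-1]. *)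
Lemma socle_lamA a z : socle z -> socle (lam a z).
Proof.
  intro Hz.
  assert (C : forall y, y + lam a z = lam a z + y).
  { intro y. rewrite <- (lam_inv a y), <- !lam_add, (socle_add_comm z _ Hz). reflexivity. }
  assert (E : (a ** z) ** cinv a = lam a z).
  { rewrite <- circA, (socle_circ z (cinv a) Hz), brace_compat, circrV, addr0,
      (circ_lam a z), (C a).
    group_simpl. }
  split; intro y.
  - unfold star. rewrite <- E, !lam_circ, (socle_lam z _ Hz), lam_inv. apply addrN.
  - apply comm_add_eq0, C.
Qed.

Lemma socle_star a z : socle z -> socle (star a z).
Proof.
  intro Hz. unfold star. apply socle_add; [apply socle_lamA | apply socle_opp]; exact Hz.
Qed.

Lemma socle_center z : socle z -> (forall a, star a z = zero A) -> center A z.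
Proof.
  intros Hz Hl y. split; [apply Hz|split; [apply Hl|]].
  apply comm_add_eq0. symmetry. apply socle_add_comm, Hz.
Qed.

End Socle.

Lemma down_to_zero (P : nat -> Prop) (N : nat) :
  P N -> (forall k, P (S k) -> P k) -> P 0.
Proof. intros HN step. induction N as [|N IH]; auto. Qed.

Section Descent.
Context {A : skew_brace}.
Context {I : A -> Prop}.
Hypothesis HI : is_ideal A I.

Lemma ideal_meets_socle (m c : nat) :
  is_trivial A (right_series A m) -> is_trivial A (lcs A c) ->
  forall x, I x -> x <> zero A -> exists z, I z /\ z <> zero A /\ socle z.
Proof.
  intros Hm Hc.
  set (goal := exists z, I z /\ z <> zero A /\ socle z).
  set (Q := fun n => forall x, I x -> x <> zero A -> right_series A n x -> goal).
  enough (Q0 : Q 0) by (intros x Ix nx; exact (Q0 x Ix nx Logic.I)).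
  apply (down_to_zero Q m).
  { intros x _ nx Rx. exfalso. apply nx, Hm, Rx. }
  intros n IHn.
  set (P := fun j => forall x, I x -> x <> zero A ->
                       right_series A n x -> lcs A j x -> goal).
  enough (P0 : P 0) by (intros x Ix nx Rx; exact (P0 x Ix nx Rx Logic.I)).
  apply (down_to_zero P c).
  { intros x _ nx _ Lx. exfalso. apply nx, Hc, Lx. }
  intros j IHj x Ix nx Rx Lx.
  destruct (classic (socle x)) as [Sx | Sx]; [exists x; auto|].
  apply not_and_or in Sx as [Sx | Sx]; apply not_all_ex_not in Sx as [y Hy].
  - apply (IHn (star x y)); auto.
    + apply ideal_star_l; auto.
    + apply right_series_star, Rx.
  - apply (IHj (comm_add y x)); auto.
    + apply ideal_comm; auto.
    + apply right_series_comm, Rx.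
    + apply lcs_comm, Lx.
Qed.

Lemma socle_ideal_meets_center (l : nat) :
  is_trivial A (left_series A l) ->
  forall z, I z -> z <> zero A -> socle z -> exists w, center A w /\ I w /\ w <> zero A.
Proof.
  intro Hl.
  set (T := fun n => forall z, I z -> z <> zero A -> socle z -> left_series A n z ->
                       exists w, center A w /\ I w /\ w <> zero A).
  enough (T0 : T 0) by (intros z Iz nz Sz; exact (T0 z Iz nz Sz Logic.I)).
  apply (down_to_zero T l).
  { intros z _ nz _ Lz. exfalso. apply nz, Hl, Lz. }
  intros n IHn z Iz nz Sz Lz.
  destruct (classic (forall a, star a z = zero A)) as [Hz | Hz].
  - exists z. split; auto. apply socle_center; auto.
  - apply not_all_ex_not in Hz as [a Ha].
    apply (IHn (star a z)); auto.
    + apply ideal_star_r; auto.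
    + apply socle_star, Sz.
    + apply left_series_star, Lz.
Qed.

End Descent.

Theorem mainTheorem7 (A : skew_brace) :
  nilpotent_type A -> star_nilpotent A ->
  (forall I : A -> Prop, is_ideal A I -> (exists x, I x /\ x <> zero A) ->
     exists z, center A z /\ I z /\ z <> zero A) /\
  ((exists x : A, x <> zero A) -> exists z : A, center A z /\ z <> zero A).
Proof.
  intros [c Hc] [[l Hl] [m Hm]].
  assert (Hideal : forall I : A -> Prop, is_ideal A I -> (exists x, I x /\ x <> zero A) ->
                     exists z, center A z /\ I z /\ z <> zero A).
  { intros I HI [x [Ix nx]].
    destruct (ideal_meets_socle HI m c Hm Hc x Ix nx) as [z [Iz [nz Sz]]].
    exact (socle_ideal_meets_center HI l Hl z Iz nz Sz). }
  split; [exact Hideal|].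
  intros [x nx].
  destruct (Hideal (full_set A) (full_set_ideal A)) as [z [Cz [_ nz]]].
  - exists x. split; [exact Logic.I | exact nx].
  - exists z. auto.
Qed.
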